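(* For each $t\in[0,\pi/6]$ and each family label $(\eta\pm)$ with $\eta\in\{0,1,2,3\}$, the $9\times 9$ matrix $R^{(\eta\pm)}(t)$ with entries $R^{(\eta\pm)}_{ij}(t)=\operatorname{Tr}\!\left[\Pi^{(\eta\pm)}_i(t)\,Q_j\right]$ (which satisfies $\Pi^{(\eta\pm)}_i(t)=\sum_j R^{(\eta\pm)}_{ij}(t)\Pi_j$) is given by $$R^{(\eta\pm)}(t)=\left[P^{(\eta\pm)}\right]^{-1}R(t)\,P^{(\eta\pm)},$$ and it is a rotation matrix, i.e. orthogonal with $\det R^{(\eta\pm)}(t)=1$.
   Context: Let $\omega=e^{2\pi i/3}$, standard basis $|0\rangle,|1\rangle,|2\rangle$ of $\mathbb{C}^3$, $X|j\rangle=|j+1\bmod 3\rangle$, $Z|j\rangle=\omega^j|j\rangle$. Canonical Hesse SIC: with $|\psi_0\rangle=\frac1{\sqrt2}(0,1,-1)^T$ and $i=3m+n+1$ ($m,n\in\{0,1,2\}$), $\Pi_i$ is the projector onto $X^mZ^n|\psi_0\rangle$; its dual basis is $Q_j=\frac13(4\Pi_j-I)$, so $\operatorname{Tr}(Q_j\Pi_k)=\delta_{jk}$. Fiducial vectors: $|\psi_t^{(0\pm)}\rangle=\frac1{\sqrt2}(0,e^{\mp it},-e^{\pm it})^T$ and, for $\eta=1,2,3$, $|\psi_t^{(\eta\pm)}\rangle=\sqrt{\tfrac23}\big(\omega^\eta\sin t,\ \sin(t\pm\tfrac{2\pi}{3}),\ \sin(t\mp\tfrac{2\pi}{3})\big)^T$.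 $\Pi^{(\eta\pm)}_i(t)$ is the projector onto $X^mZ^n|\psi^{(\eta\pm)}_t\rangle$ with $i=3m+n+1$. Permutations of $\{1,\dots,9\}$, listed as $(p(1),\dots,p(9))$: $p^{(0+)}=(1,2,3,4,5,6,7,8,9)$, $p^{(0-)}=(1,3,2,4,6,5,7,9,8)$, $p^{(1+)}=(1,5,9,2,6,7,3,4,8)$, $p^{(1-)}=(1,9,5,2,7,6,3,8,4)$, $p^{(2+)}=(1,6,8,2,4,9,3,5,7)$, $p^{(2-)}=(1,8,6,2,9,4,3,7,5)$, $p^{(3+)}=(1,4,7,2,5,8,3,6,9)$, $p^{(3-)}=(1,7,4,2,8,5,3,9,6)$. $P^{(\eta\pm)}$ is the permutation matrix with $P^{(\eta\pm)}_{ij}=\delta_{j,p^{(\eta\pm)}(i)}$. Let $a(t)=\frac13(1+2\cos 2t)$, $A(t)=\begin{pmatrix}a(t)&a(t-\frac\pi3)&a(t+\frac\pi3)\\ a(t+\frac\pi3)&a(t)&a(t-\frac\pi3)\\ a(t-\frac\pi3)&a(t+\frac\pi3)&a(t)\end{pmatrix}$, and $R(t)=\mathrm{diag}(A(t),A(t),A(t))=I_3\otimes A(t)$ (block diagonal). *)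

From Stdlib Require Import Reals Lra ClassicalEpsilon FunctionalExtensionality.
From HB Require Import structures.
From mathcomp Require Import all_boot all_order all_algebra.
Set Implicit Arguments. Unset Strict Implicit. Unset Printing Implicit Defensive.

Definition Reqb (x y : R) : bool := if Req_EM_T x y then true else false.
Lemma Reqb_axiom : Equality.axiom Reqb.
Proof. move=> x y; rewrite /Reqb; case: Req_EM_T => h; by constructor. Qed.
HB.instance Definition _ := hasDecEq.Build R Reqb_axiom.

Definition Rfind (P : pred R) (n : nat) : option R :=
  match excluded_middle_informative (exists x, P x) with
  | left h => Some (proj1_sig (constructive_indefinite_description _ h))
  | right _ => None
  end.
Lemma Rfind_correct P n x : Rfind P n = Some x -> P x.
Proof.
rewrite /Rfind; case: excluded_middle_informative => // h [<-].
by case: constructive_indefinite_description.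
Qed.
Lemma Rfind_complete (P : pred R) : (exists x, P x) -> exists n, Rfind P n.
Proof. move=> h; exists 0%N; rewrite /Rfind; by case: excluded_middle_informative. Qed.
Lemma Rfind_ext (P Q : pred R) : P =1 Q -> Rfind P =1 Rfind Q.
Proof.
move=> eqPQ; have -> : P = Q.
  by apply: functional_extensionality => x; apply: eqPQ.
by [].
Qed.
HB.instance Definition _ := hasChoice.Build R Rfind_correct Rfind_complete Rfind_ext.

Lemma R_addNr : left_inverse R0 Ropp Rplus.
Proof. move=> x; lra. Qed.
Lemma R_add0r : left_id R0 Rplus.
Proof. move=> x; lra. Qed.
Lemma R_addrA : associative Rplus.
Proof. move=> x y z; lra. Qed.
Lemma R_addrC : commutative Rplus.
Proof. move=> x y; lra. Qed.
HB.instance Definition _ :=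
  GRing.isZmodule.Build R R_addrA R_addrC R_add0r R_addNr.

Lemma R_mulrA : associative Rmult.
Proof. move=> x y z; ring. Qed.
Lemma R_mulrC : commutative Rmult.
Proof. move=> x y; ring. Qed.
Lemma R_mul1r : left_id R1 Rmult.
Proof. move=> x; ring. Qed.
Lemma R_mulrDl : left_distributive Rmult Rplus.
Proof. move=> x y z; ring. Qed.
Lemma R_oner_neq0 : (R1 : R) != (R0 : R).
Proof. apply/eqP; exact: R1_neq_R0. Qed.
HB.instance Definition _ :=
  GRing.Zmodule_isComNzRing.Build R R_mulrA R_mulrC R_mul1r R_mulrDl R_oner_neq0.

Definition Rinv' (x : R) : R := if Reqb x R0 then R0 else Rinv x.
Lemma R_mulVf (x : R) : x != R0 -> Rmult (Rinv' x) x = R1.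
Proof.
move=> /eqP hx; rewrite /Rinv' /Reqb.
destruct (Req_EM_T x R0) as [e|ne]; [by case: hx | by apply: Rinv_l].
Qed.
Lemma R_invr0 : Rinv' R0 = R0.
Proof. rewrite /Rinv' /Reqb; destruct (Req_EM_T R0 R0) as [e|ne]; [by [] | by case: ne]. Qed.
HB.instance Definition _ := GRing.ComNzRing_isField.Build R R_mulVf R_invr0.

Record C := mkC { Re : R; Im : R }.
Local Open Scope R_scope.
Definition Cofr (r : R) : C := mkC r 0.
Definition C0 : C := mkC 0 0.
Definition Cadd (z w : C) : C := mkC (Re z + Re w) (Im z + Im w).
Definition Copp (z : C) : C := mkC (- Re z) (- Im z).
Definition Cmul (z w : C) : C :=
  mkC (Re z * Re w - Im z * Im w) (Re z * Im w + Im z * Re w).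
Definition Cconj (z : C) : C := mkC (Re z) (- Im z).
Definition Cscal (r : R) (z : C) : C := mkC (r * Re z) (r * Im z).
Definition Cnorm2 (z : C) : R := Re z * Re z + Im z * Im z.
Fixpoint Cpow (z : C) (n : nat) : C :=
  match n with O => Cofr 1 | S k => Cmul z (Cpow z k) end.
Definition expi (th : R) : C := mkC (cos th) (sin th).
Definition omega : C := expi (2 * PI / 3).

(* vectors of C^3, components indexed by 0,1,2 *)
Definition vec3 := nat -> C.
Definition mkvec3 (a b c : C) : vec3 :=
  fun k => match k with 0%nat => a | 1%nat => b | _ => c end.
Definition sum3 (f : nat -> C) : C := Cadd (f 0%nat) (Cadd (f 1%nat) (f 2%nat)).
Definition vnorm2 (v : vec3) : R := Cnorm2 (v 0%nat) + Cnorm2 (v 1%nat) + Cnorm2 (v 2%nat).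

(* X|j> = |j+1 mod 3>,  Z|j> = omega^j |j> *)
Definition Xop (v : vec3) : vec3 := fun k => v ((k + 2) mod 3)%nat.
Definition Zop (v : vec3) : vec3 := fun k => Cmul (Cpow omega k) (v k).
Definition displace (m n : nat) (v : vec3) : vec3 := Nat.iter m Xop (Nat.iter n Zop v).

Definition cmat3 := nat -> nat -> C.
Definition cmul3 (A B : cmat3) : cmat3 := fun a b => sum3 (fun k => Cmul (A a k) (B k b)).
Definition ctr3 (A : cmat3) : C := sum3 (fun k => A k k).
Definition cid3 : cmat3 := fun a b => if Nat.eqb a b then Cofr 1 else C0.
Definition proj (v : vec3) : cmat3 :=
  fun a b => Cscal (/ vnorm2 v) (Cmul (v a) (Cconj (v b))).

(* Index convention: the paper's index i in {1..9}, i = 3m+n+1, is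
   represented by i' : 'I_9 with i' = i - 1 = 3m+n, so m = i' / 3, n = i' mod 3. *)
Definition idx_m (i : nat) : nat := (i %/ 3)%N.
Definition idx_n (i : nat) : nat := (i %% 3)%N.

Definition psi0 : vec3 := mkvec3 C0 (Cofr (/ sqrt 2)) (Cofr (- / sqrt 2)).
Definition PiH (i : nat) : cmat3 := proj (displace (idx_m i) (idx_n i) psi0).
Definition Qdual (j : nat) : cmat3 :=
  fun a b => Cscal (/ 3) (Cadd (Cscal 4 (PiH j a b)) (Copp (cid3 a b))).

(* family labels (eta, sign): eta in {0,1,2,3}, s = true for '+', false for '-' *)
Definition sgn (s : bool) : R := if s then 1 else -1.
Definition fiducial (eta : nat) (s : bool) (t : R) : vec3 :=
  match eta with
  | 0%nat => mkvec3 C0 (Cscal (/ sqrt 2) (expi (- sgn s * t)))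
                      (Copp (Cscal (/ sqrt 2) (expi (sgn s * t))))
  | _ => mkvec3 (Cscal (sqrt (2/3)) (Cscal (sin t) (Cpow omega eta)))
                (Cofr (sqrt (2/3) * sin (t + sgn s * (2 * PI / 3))))
                (Cofr (sqrt (2/3) * sin (t - sgn s * (2 * PI / 3))))
  end.
Definition PiF (eta : nat) (s : bool) (t : R) (i : nat) : cmat3 :=
  proj (displace (idx_m i) (idx_n i) (fiducial eta s t)).

Definition Rfam_entry (eta : nat) (s : bool) (t : R) (i j : nat) : C :=
  ctr3 (cmul3 (PiF eta s t i) (Qdual j)).

(* permutations, listed 1-based as in the paper *)
Definition perm_list (eta : nat) (s : bool) : seq nat :=
  match eta, s with
  | 0%nat, true  => [:: 1; 2; 3; 4; 5; 6; 7; 8; 9]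
  | 0%nat, false => [:: 1; 3; 2; 4; 6; 5; 7; 9; 8]
  | 1%nat, true  => [:: 1; 5; 9; 2; 6; 7; 3; 4; 8]
  | 1%nat, false => [:: 1; 9; 5; 2; 7; 6; 3; 8; 4]
  | 2%nat, true  => [:: 1; 6; 8; 2; 4; 9; 3; 5; 7]
  | 2%nat, false => [:: 1; 8; 6; 2; 9; 4; 3; 7; 5]
  | _, true      => [:: 1; 4; 7; 2; 5; 8; 3; 6; 9]
  | _, false     => [:: 1; 7; 4; 2; 8; 5; 3; 9; 6]
  end%N.
Close Scope R_scope.

Local Open Scope ring_scope.
(* P_{ij} = delta_{j, p(i)}  (0-based: j+1 = p(i+1)) *)
Definition Pmat (eta : nat) (s : bool) : 'M[R]_9 :=
  \matrix_(i < 9, j < 9) (if (j.+1 == nth 0%N (perm_list eta s) i)%N then 1 else 0).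

Definition aR (t : R) : R := ((1 + 2 * cos (2 * t)) / 3)%R.
Definition Amat (t : R) : 'M[R]_3 :=
  \matrix_(i < 3, j < 3)
    match (val i, val j) with
    | (0, 0)%N => aR t            | (0, 1)%N => aR (t - PI/3)%R | (0, 2)%N => aR (t + PI/3)%R
    | (1, 0)%N => aR (t + PI/3)%R | (1, 1)%N => aR t            | (1, 2)%N => aR (t - PI/3)%R
    | (2, 0)%N => aR (t - PI/3)%R | (2, 1)%N => aR (t + PI/3)%R | _ => aR t
    end.
(* R(t) = diag(A,A,A) = I_3 (x) A(t) *)
Definition Rbig (t : R) : 'M[R]_9 :=
  \matrix_(i < 9, j < 9)
    (if (i %/ 3 == j %/ 3)%N then Amat t (inZp (i %% 3)) (inZp (j %% 3)) else 0).

From Stdlib Require Import Reals Lra Lia.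
From HB Require Import structures.
From mathcomp Require Import all_boot all_order all_algebra fingroup perm.
From mathcomp Require ring.

(* For unit vectors, Tr[Pi_v Q_u] = (4 |<u, v>|^2 - 1) / 3 (trace_proj_dual), so
   the entry R^(eta s)_ij(t) is determined by the overlap of X^m_i Z^n_i psi_t
   with X^m_j Z^n_j psi_0.  Weyl-Heisenberg covariance (overlap_covariance)
   reduces it to the overlap of psi_0 with the fiducial displaced by the label
   difference; these nine overlaps are tabulated in fiducial_overlap and take
   the values cos^2 t, cos^2 (t -+ pi/3) and 1/4.  The permutation p carries this
   table onto the block pattern of R(t) = I_3 (x) A(t) (perm_overlap_code), and
   4 cos^2 x - 1 = 1 + 2 cos 2x turns the values into a(t), a(t -+ pi/3) and 0;
   as P is the permutation matrix of p, this is R^(eta s) = P^-1 R P.  Finally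
   A(t) is a circulant matrix whose entries satisfy three trigonometric
   identities, hence a rotation; so is the block-diagonal R(t), and conjugating
   by a permutation matrix preserves both properties. *)

Local Open Scope R_scope.

Lemma sqrt3_sq : sqrt 3 * sqrt 3 = 3.
Proof. by apply: sqrt_sqrt; lra. Qed.

Lemma sin_cos_sq x : sin x ^ 2 + cos x ^ 2 = 1.
Proof. by rewrite -(sin2_cos2 x) /Rsqr; ring. Qed.

Lemma inv_sqrt2_sq : / sqrt 2 * / sqrt 2 = / 2.
Proof. by rewrite -Rinv_mult sqrt_sqrt //; lra. Qed.

Lemma sqrt_2_3_sq : sqrt (2 / 3) * sqrt (2 / 3) = 2 / 3.
Proof. by apply: sqrt_sqrt; lra. Qed.

Lemma sqrt2_neq0 : sqrt 2 <> 0.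
Proof. by apply: Rgt_not_eq; apply: sqrt_lt_R0; lra. Qed.

Lemma sqrt3_pow n : sqrt 3 ^ n.+2 = 3 * sqrt 3 ^ n.
Proof. by rewrite /= -Rmult_assoc sqrt3_sq. Qed.

Lemma inv_sqrt2_pow n : (/ sqrt 2) ^ n.+2 = / 2 * (/ sqrt 2) ^ n.
Proof. by rewrite /= -Rmult_assoc inv_sqrt2_sq. Qed.

Lemma sqrt_2_3_pow n : sqrt (2 / 3) ^ n.+2 = 2 / 3 * sqrt (2 / 3) ^ n.
Proof. by rewrite /= -Rmult_assoc sqrt_2_3_sq. Qed.

(* Hermitian inner product <u, v>, antilinear in the first argument. *)
Definition cinner (u v : vec3) : C := sum3 (fun k => Cmul (Cconj (u k)) (v k)).

Notation omega_pow := (Cpow omega).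

Lemma C_ext (a b : C) : Re a = Re b -> Im a = Im b -> a = b.
Proof. by case: a; case: b => /= ? ? ? ? -> ->. Qed.

Lemma CmulA a b c : Cmul a (Cmul b c) = Cmul (Cmul a b) c.
Proof. by apply: C_ext; rewrite /Cmul /=; ring. Qed.

Lemma Cmul1 z : Cmul (Cofr 1) z = z.
Proof. by apply: C_ext; rewrite /Cmul /Cofr /=; ring. Qed.

Lemma Cconj_mul a b : Cconj (Cmul a b) = Cmul (Cconj a) (Cconj b).
Proof. by apply: C_ext; rewrite /Cmul /Cconj /=; ring. Qed.

Lemma Cnorm2_mul a b : Cnorm2 (Cmul a b) = Cnorm2 a * Cnorm2 b.
Proof. by rewrite /Cnorm2 /Cmul /=; ring. Qed.

Lemma Cpow_add a m n : Cpow a (m + n) = Cmul (Cpow a m) (Cpow a n).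
Proof. by elim: m => [|m IH] /=; rewrite ?Cmul1 // IH CmulA. Qed.

Lemma Cpow_mul a m n : Cpow a (m * n) = Cpow (Cpow a m) n.
Proof.
elim: n => [|n IH]; first by rewrite muln0.
by rewrite mulnS Cpow_add IH.
Qed.

Lemma omegaE : omega = mkC (-1/2) (sqrt 3 / 2).
Proof.
rewrite /omega /expi (_ : 2 * PI / 3 = 2 * (PI / 3)); last by field.
by rewrite cos_2PI3 sin_2PI3.
Qed.

Lemma omega_pow2 : omega_pow 2 = mkC (-1/2) (- (sqrt 3 / 2)).
Proof.
rewrite /= omegaE; apply: C_ext; rewrite /Cmul /Cofr /=; last by field.
by rewrite Rmult_1_r; field_simplify; rewrite ?sqrt3_sq ?(pow2_sqrt 3); [field|lra].
Qed.

Lemma omega_cube : omega_pow 3 = Cofr 1.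
Proof.
rewrite (_ : 3%nat = (1 + 2)%nat) // Cpow_add omega_pow2 /= omegaE.
apply: C_ext; rewrite /Cmul /Cofr /=; field_simplify; rewrite ?(pow2_sqrt 3); lra.
Qed.

Lemma omega_pow_mod n : omega_pow n = omega_pow (n mod 3).
Proof.
rewrite {1}(Nat.div_mod_eq n 3) Cpow_add (Cpow_mul _ 3 (n / 3)) omega_cube.
have one_pow q : Cpow (Cofr 1) q = Cofr 1 by elim: q => //= q ->; rewrite Cmul1.
by rewrite one_pow Cmul1.
Qed.

Lemma Cnorm2_omega : Cnorm2 omega = 1.
Proof. by rewrite omegaE /Cnorm2 /=; field_simplify; rewrite ?(pow2_sqrt 3); lra. Qed.

Lemma Cnorm2_omega_pow n : Cnorm2 (omega_pow n) = 1.
Proof.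
elim: n => [|n IH] /=; first by rewrite /Cnorm2 /=; ring.
by rewrite Cnorm2_mul IH Cnorm2_omega; ring.
Qed.

Lemma Cconj_omega_pow n : Cconj (omega_pow n) = omega_pow (2 * n).
Proof.
rewrite Cpow_mul omega_pow2.
elim: n => [|n IH] /=; first by apply: C_ext; rewrite /=; ring.
by rewrite Cconj_mul IH omegaE.
Qed.

(** * Weyl-Heisenberg displacements *)

Lemma sum3_ext (f g : nat -> C) :
  (forall k, (k < 3)%coq_nat -> f k = g k) -> sum3 f = sum3 g.
Proof. by move=> fg; rewrite /sum3 !fg //; lia. Qed.

Lemma sum3_shift (g : nat -> C) r : sum3 (fun k => g ((k + r) mod 3)) = sum3 g.
Proof.
have shift k : ((k + r) mod 3 = (k + r mod 3) mod 3)%coq_nat.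
  by rewrite Nat.Div0.add_mod_idemp_r.
rewrite (sum3_ext _ (fun k => g ((k + r mod 3) mod 3))) => [|k _]; last by rewrite shift.
have : (r mod 3 < 3)%coq_nat by apply: Nat.mod_upper_bound.
move: (r mod 3) => [|[|[|q]]] lt_q3 //=; last lia;
  by rewrite /sum3; apply: C_ext; rewrite /Cadd /=; ring.
Qed.

Lemma sum3_scale c (f : nat -> C) : sum3 (fun k => Cmul c (f k)) = Cmul c (sum3 f).
Proof. by apply: C_ext; rewrite /sum3 /Cadd /Cmul /=; ring. Qed.

(* On the components 0, 1, 2: (X^m v)_k = v_(k - m). *)
Lemma Xop_iter m v k : (k < 3)%coq_nat ->
  Nat.iter m Xop v k = v ((k + 2 * m) mod 3).
Proof.
elim: m k => [|m IH] k lt_k3; first by rewrite muln0 addn0 Nat.mod_small.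
change (Nat.iter m.+1 Xop v k) with (Nat.iter m Xop v ((k + 2) mod 3)).
rewrite IH; last by apply: Nat.mod_upper_bound.
by rewrite Nat.Div0.add_mod_idemp_l mulnS addnA.
Qed.

Lemma Zop_iter n v k : Nat.iter n Zop v k = Cmul (omega_pow (n * k)) (v k).
Proof. by elim: n => [|n IH] /=; rewrite ?Cmul1 // /Zop IH CmulA -Cpow_add mulSn. Qed.

Lemma displaceE m n v k : (k < 3)%coq_nat ->
  displace m n v k =
  Cmul (omega_pow (n * ((k + 2 * m) mod 3))) (v ((k + 2 * m) mod 3)).
Proof. by move=> lt_k3; rewrite /displace Xop_iter // Zop_iter. Qed.

(** * Covariance of overlaps *)

Lemma Cmul_swap a b c d : Cmul (Cmul a b) (Cmul c d) = Cmul (Cmul a c) (Cmul b d).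
Proof. by apply: C_ext; rewrite /Cmul /=; ring. Qed.

(* Re-indexing <X^m Z^n u, X^m' Z^n' f> by j = k - m. *)
Lemma cinner_displace m n m' n' u f :
  cinner (displace m n u) (displace m' n' f) =
  sum3 (fun j => Cmul (Cconj (Cmul (omega_pow (n * j)) (u j)))
    (Cmul (omega_pow (n' * ((j + (2 * m' + m) mod 3) mod 3)))
          (f ((j + (2 * m' + m) mod 3) mod 3)))).
Proof.
rewrite /cinner -[in RHS](sum3_shift _ (2 * m)); apply: sum3_ext => k lt_k3; cbv beta.
have -> : (((k + 2 * m) mod 3 + (2 * m' + m) mod 3) mod 3 = (k + 2 * m') mod 3)%coq_nat.
  rewrite -Nat.Div0.add_mod (_ : (k + 2 * m + (2 * m' + m) = k + 2 * m' + m * 3)%coq_nat);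
    last lia.
  by rewrite Nat.Div0.mod_add.
by rewrite !displaceE.
Qed.

(* The phase identity behind the Weyl relation Z X = omega X Z, checked on
   residues: omega^(-n j) omega^(n' (j + mu)) = omega^(n mu) omega^((n' - n) (j + mu)). *)
Lemma phase_residue n n' j mu :
  (n < 3)%coq_nat -> (n' < 3)%coq_nat -> (j < 3)%coq_nat -> (mu < 3)%coq_nat ->
  ((2 * (n * j) + n' * ((j + mu) mod 3)) mod 3 =
   (n * mu + ((2 * n + n') mod 3) * ((j + mu) mod 3)) mod 3)%coq_nat.
Proof.
by case: n => [|[|[|?]]]; case: n' => [|[|[|?]]]; case: j => [|[|[|?]]];
  case: mu => [|[|[|?]]]; move=> *; (reflexivity || lia).
Qed.

(* 2 (2m + m') = (2m' + m) modulo 3, i.e. shifting by -(m' - m) twice. *)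
Lemma mod3_double_shift j m m' :
  ((j + 2 * ((2 * m + m') mod 3)) mod 3 = (j + (2 * m' + m) mod 3) mod 3)%coq_nat.
Proof.
rewrite -Nat.Div0.add_mod_idemp_r Nat.Div0.mul_mod_idemp_r !Nat.Div0.add_mod_idemp_r.
rewrite (_ : (j + 2 * (2 * m + m') = j + (2 * m' + m) + m * 3)%coq_nat); last lia.
by rewrite Nat.Div0.mod_add.
Qed.

(* Up to a unimodular phase, <X^m Z^n u, X^m' Z^n' f> = <u, X^(m'-m) Z^(n'-n) f>. *)
Lemma cinner_displace_phase m n m' n' u f : (n < 3)%coq_nat -> (n' < 3)%coq_nat ->
  cinner (displace m n u) (displace m' n' f) =
  Cmul (omega_pow (n * ((2 * m' + m) mod 3)))
       (cinner u (displace ((2 * m + m') mod 3) ((2 * n + n') mod 3) f)).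
Proof.
move=> lt_n3 lt_n'3.
have lt_mu3 : ((2 * m' + m) mod 3 < 3)%coq_nat by apply: Nat.mod_upper_bound.
rewrite cinner_displace /cinner -sum3_scale; apply: sum3_ext => j lt_j3.
rewrite displaceE // mod3_double_shift Cconj_mul Cconj_omega_pow Cmul_swap.
rewrite -Cpow_add (omega_pow_mod (_ + _)) phase_residue // -omega_pow_mod Cpow_add.
by apply: C_ext; rewrite /Cmul /=; ring.
Qed.

(* The label 3m + n of X^(m'-m) Z^(n'-n), for labels a = 3m + n and b = 3m' + n'. *)
Definition label_diff (b a : nat) : nat :=
  ((2 * idx_m a + idx_m b) mod 3) * 3 + (2 * idx_n a + idx_n b) mod 3.

Lemma idx_n_lt a : (idx_n a < 3)%coq_nat.
Proof. by apply/ltP; rewrite ltn_pmod. Qed.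

Lemma idx_label q r : (r < 3)%coq_nat -> idx_m (q * 3 + r) = q /\ idx_n (q * 3 + r) = r.
Proof.
move=> /ltP lt_r3; rewrite /idx_m /idx_n divnMDl // modnMDl.
by rewrite divn_small // addn0 modn_small.
Qed.

Lemma label_diff_lt b a : (label_diff b a < 9)%coq_nat.
Proof.
rewrite /label_diff.
have := Nat.mod_upper_bound (2 * idx_m a + idx_m b) 3.
have := Nat.mod_upper_bound (2 * idx_n a + idx_n b) 3.
lia.
Qed.

Lemma overlap_covariance (u f : vec3) a b :
  Cnorm2 (cinner (displace (idx_m a) (idx_n a) u) (displace (idx_m b) (idx_n b) f)) =
  Cnorm2 (cinner u (displace (idx_m (label_diff b a)) (idx_n (label_diff b a)) f)).
Proof.
rewrite /label_diff; have [-> ->] := idx_label ((2 * idx_m a + idx_m b) mod 3) _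
  (Nat.mod_upper_bound (2 * idx_n a + idx_n b) 3 ltac:(lia)).
rewrite (cinner_displace_phase _ _ _ _ _ _ (idx_n_lt a) (idx_n_lt b)).
rewrite Cnorm2_mul Cnorm2_omega_pow.
by rewrite Rmult_1_l.
Qed.

Definition dual_of (u : vec3) : cmat3 :=
  fun a b => Cscal (/ 3) (Cadd (Cscal 4 (proj u a b)) (Copp (cid3 a b))).

Lemma trace_dual_linear (A B D : cmat3) :
  ctr3 (cmul3 A (fun a b => Cscal (/ 3) (Cadd (Cscal 4 (B a b)) (Copp (D a b))))) =
  Cscal (/ 3) (Cadd (Cscal 4 (ctr3 (cmul3 A B))) (Copp (ctr3 (cmul3 A D)))).
Proof. by apply: C_ext; rewrite /ctr3 /cmul3 /sum3 /Cscal /Cadd /Copp /Cmul /=; ring. Qed.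

Lemma trace_proj_proj (v u : vec3) : vnorm2 v = 1 -> vnorm2 u = 1 ->
  ctr3 (cmul3 (proj v) (proj u)) = Cofr (Cnorm2 (cinner u v)).
Proof.
rewrite /proj => -> ->; rewrite Rinv_1.
rewrite /cinner /ctr3 /cmul3 /sum3 /Cnorm2 /Cofr.
move: (v 0%nat) (v 1%nat) (v 2%nat) (u 0%nat) (u 1%nat) (u 2%nat).
by move=> [? ?] [? ?] [? ?] [? ?] [? ?] [? ?]; apply: C_ext;
  rewrite /Cscal /Cadd /Cmul /Cconj /=; ring.
Qed.

Lemma trace_proj (v : vec3) : vnorm2 v = 1 -> ctr3 (cmul3 (proj v) cid3) = Cofr 1.
Proof.
rewrite /proj => norm_v; rewrite norm_v Rinv_1 -[in RHS]norm_v.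
rewrite /vnorm2 /ctr3 /cmul3 /sum3 /cid3 /Cnorm2 /Cofr /=.
by apply: C_ext; rewrite /Cscal /Cadd /Cmul /Cconj /C0 /=; ring.
Qed.

Lemma trace_proj_dual (v u : vec3) : vnorm2 v = 1 -> vnorm2 u = 1 ->
  ctr3 (cmul3 (proj v) (dual_of u)) = Cofr ((4 * Cnorm2 (cinner u v) - 1) / 3).
Proof.
move=> norm_v norm_u; rewrite /dual_of trace_dual_linear.
rewrite trace_proj_proj // trace_proj //.
by apply: C_ext; rewrite /Cscal /Cadd /Copp /Cofr /=; field.
Qed.

Lemma vnorm2_Xop v : vnorm2 (Xop v) = vnorm2 v.
Proof. by rewrite /vnorm2 /Xop /=; ring. Qed.

Lemma vnorm2_Zop v : vnorm2 (Zop v) = vnorm2 v.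
Proof. by rewrite /vnorm2 /Zop !Cnorm2_mul ?Cnorm2_omega Cnorm2_omega_pow; ring. Qed.

Lemma vnorm2_displace m n v : vnorm2 (displace m n v) = vnorm2 v.
Proof.
rewrite /displace; elim: m => [|m IH] /=; last by rewrite vnorm2_Xop.
by elim: n => [|n IH] //=; rewrite vnorm2_Zop.
Qed.

Lemma vnorm2_psi0 : vnorm2 psi0 = 1.
Proof.
rewrite /vnorm2 /psi0 /mkvec3 /Cnorm2 /Cofr /C0 /=.
by rewrite Rmult_opp_opp inv_sqrt2_sq; lra.
Qed.

Lemma sgn_opp s : - sgn s = sgn (~~ s).
Proof. by case: s => /=; ring. Qed.

Lemma expi_sgn s t : expi (sgn s * t) = mkC (cos t) (sgn s * sin t).
Proof.
case: s; rewrite /expi /=; first by rewrite !Rmult_1_l.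
by rewrite (_ : -1 * t = - t) ?cos_neg ?sin_neg; [congr mkC; ring | ring].
Qed.

Lemma sin_sgn_shift s t :
  sin (t + sgn s * (2 * PI / 3)) = - sin t / 2 + sgn s * (sqrt 3 / 2) * cos t.
Proof.
rewrite (_ : 2 * PI / 3 = 2 * (PI / 3)); last by field.
case: s => /=; rewrite ?Rmult_1_l.
  by rewrite sin_plus cos_2PI3 sin_2PI3; field.
by rewrite (_ : t + -1 * _ = t - 2 * (PI / 3)) ?sin_minus ?cos_2PI3 ?sin_2PI3; [field|ring].
Qed.

Lemma sin_shift_sq_sum s t :
  sin t ^ 2 + sin (t + sgn s * (2 * PI / 3)) ^ 2 + sin (t - sgn s * (2 * PI / 3)) ^ 2 = 3 / 2.
Proof.
have pythagoras := sin_cos_sq t.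
rewrite /Rminus Ropp_mult_distr_l sgn_opp !sin_sgn_shift.
by case: s => /=; rewrite /Rdiv; ring_simplify; rewrite pow2_sqrt; lra.
Qed.

Lemma Cnorm2_scal r z : Cnorm2 (Cscal r z) = r * r * Cnorm2 z.
Proof. by rewrite /Cnorm2 /Cscal /=; ring. Qed.

Lemma Cnorm2_opp z : Cnorm2 (Copp z) = Cnorm2 z.
Proof. by rewrite /Cnorm2 /Copp /=; ring. Qed.

Lemma Cnorm2_expi x : Cnorm2 (expi x) = 1.
Proof. by rewrite /Cnorm2 /expi /= -(sin_cos_sq x); ring. Qed.

Lemma vnorm2_fiducial eta s t : vnorm2 (fiducial eta s t) = 1.
Proof.
case: eta => [|eta]; rewrite /vnorm2 /fiducial /mkvec3 /=.
  rewrite Cnorm2_opp !Cnorm2_scal !Cnorm2_expi /Cnorm2 /C0 /= inv_sqrt2_sq; lra.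
rewrite !Cnorm2_scal Cnorm2_mul Cnorm2_omega Cnorm2_omega_pow /Cnorm2 /Cofr /=.
have := sin_shift_sq_sum s t.
set r := sqrt (2 / 3); set a := sin (t + _); set b := sin (t - _) => sum_sq.
transitivity (r * r * (sin t ^ 2 + a ^ 2 + b ^ 2)); first by ring.
by rewrite sum_sq /r sqrt_2_3_sq; field.
Qed.

(** * Overlaps of the fiducial vectors with the Hesse fiducial *)

(* The four values of |<psi_0, X^m Z^n psi_t>|^2 that occur. *)
Definition overlap_value (t : R) (k : nat) : R :=
  match k with
  | 0%nat => cos t ^ 2
  | 1%nat => cos (t - PI / 3) ^ 2
  | 2%nat => cos (t + PI / 3) ^ 2
  | _ => / 4
  end.

(* Which of these values belongs to the label d = 3m + n, for each family. *)
Definition overlap_code (eta : nat) (s : bool) : seq nat :=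
  match eta, s with
  | 0%nat, true  => [:: 0; 2; 1; 3; 3; 3; 3; 3; 3]
  | 0%nat, false => [:: 0; 1; 2; 3; 3; 3; 3; 3; 3]
  | 1%nat, true  => [:: 0; 3; 3; 3; 2; 3; 3; 3; 1]
  | 1%nat, false => [:: 0; 3; 3; 3; 1; 3; 3; 3; 2]
  | 2%nat, true  => [:: 0; 3; 3; 3; 3; 2; 3; 1; 3]
  | 2%nat, false => [:: 0; 3; 3; 3; 3; 1; 3; 2; 3]
  | _, true      => [:: 0; 3; 3; 2; 3; 3; 1; 3; 3]
  | _, false     => [:: 0; 3; 3; 1; 3; 3; 2; 3; 3]
  end%N.

Lemma overlap_psi0 (w : vec3) :
  Cnorm2 (cinner psi0 w) = Cnorm2 (Cadd (w 1%nat) (Copp (w 2%nat))) / 2.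
Proof.
rewrite /cinner /sum3 /psi0 /mkvec3 /Cnorm2 /Cadd /Copp /Cmul /Cconj /Cofr /C0 /=.
move: (w 1%nat) (w 2%nat) => [? ?] [? ?] /=.
by rewrite /Rdiv; ring_simplify; rewrite inv_sqrt2_pow; ring.
Qed.

Lemma omega_pow1 : omega_pow 1 = mkC (-1/2) (sqrt 3 / 2).
Proof. by rewrite /= omegaE; apply: C_ext; rewrite /Cmul /Cofr /=; ring. Qed.

Lemma omega_pow4 : omega_pow 4 = omega_pow 1.
Proof. by rewrite omega_pow_mod. Qed.

Lemma cos_shift_PI3 t :
  cos (t - PI / 3) = cos t / 2 + sqrt 3 / 2 * sin t /\
  cos (t + PI / 3) = cos t / 2 - sqrt 3 / 2 * sin t.
Proof. by rewrite cos_minus cos_plus cos_PI3 sin_PI3; split; field. Qed.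

Ltac eval_indices :=
  repeat match goal with
  | |- context [idx_m ?n] => let v := eval vm_compute in (idx_m n) in change (idx_m n) with v
  | |- context [idx_n ?n] => let v := eval vm_compute in (idx_n n) in change (idx_n n) with v
  | |- context [Nat.modulo ?a ?b] =>
      let v := eval vm_compute in (Nat.modulo a b) in change (Nat.modulo a b) with v
  | |- context [muln ?a ?b] => let v := eval vm_compute in (muln a b) in change (muln a b) with v
  end.

Lemma fiducial_overlap eta s t d : (eta < 4)%coq_nat -> (d < 9)%coq_nat ->
  Cnorm2 (cinner psi0 (displace (idx_m d) (idx_n d) (fiducial eta s t))) =
  overlap_value t (nth 3%nat (overlap_code eta s) d).
Proof.
move=> lt_eta4 lt_d9; rewrite overlap_psi0 !displaceE; try by auto.
have [cos_minus_PI3 cos_plus_PI3] := cos_shift_PI3 t.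
have pythagoras : sin t ^ 2 = 1 - cos t ^ 2 by rewrite -(sin_cos_sq t); ring.
case: s; case: eta lt_eta4 => [|[|[|[|?]]]] ?; try (exfalso; lia);
  rewrite /fiducial /mkvec3 ?sgn_opp ?expi_sgn;
  case: d lt_d9 => [|[|[|[|[|[|[|[|[|?]]]]]]]]] ?; try (exfalso; lia);
  eval_indices; cbn [nth overlap_code overlap_value];
  rewrite ?cos_minus_PI3 ?cos_plus_PI3 ?omega_pow4 ?omega_pow2 ?omega_pow1 ?omega_cube;
  rewrite /Rminus ?Ropp_mult_distr_l ?sgn_opp ?sin_sgn_shift;
  rewrite /Cnorm2 /Cadd /Copp /Cmul /Cscal /Cofr /C0 /=;
  rewrite /Rdiv; ring_simplify; rewrite ?sqrt3_pow ?inv_sqrt2_pow ?sqrt_2_3_pow ?pythagoras;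
  field; exact: sqrt2_neq0.
Qed.

(* 0-based form of the permutation p: p(i + 1) = perm_index i + 1. *)
Definition perm_index (eta : nat) (s : bool) (i : nat) : nat :=
  (nth 0%nat (perm_list eta s) i).-1.

(* Position of the entry (i, j) in R(t) = I_3 (x) A(t): 0, 1, 2 for the entries
   a(t), a(t - pi/3), a(t + pi/3) of a diagonal block, 3 off the diagonal blocks. *)
Definition rot_pattern (i j : nat) : nat :=
  (if idx_m i == idx_m j then
     if idx_n i == idx_n j then 0 else if idx_n j == (idx_n i + 1) %% 3 then 1 else 2
   else 3)%N.

Lemma perm_overlap_code eta s i j : (eta < 4)%coq_nat -> (i < 9)%coq_nat -> (j < 9)%coq_nat ->
  nth 3%nat (overlap_code eta s) (label_diff (perm_index eta s i) (perm_index eta s j)) =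
  rot_pattern i j.
Proof.
move=> lt_eta4 lt_i9 lt_j9.
case: eta lt_eta4 => [|[|[|[|?]]]] ?; try (exfalso; lia); case: s;
  case: i lt_i9 => [|[|[|[|[|[|[|[|[|?]]]]]]]]] ?; try (exfalso; lia);
  case: j lt_j9 => [|[|[|[|[|[|[|[|[|?]]]]]]]]] ?; try (exfalso; lia);
  by vm_compute.
Qed.

Lemma Rfam_entry_perm eta s t i j : (eta < 4)%coq_nat -> (i < 9)%coq_nat -> (j < 9)%coq_nat ->
  Rfam_entry eta s t (perm_index eta s i) (perm_index eta s j) =
  Cofr ((4 * overlap_value t (rot_pattern i j) - 1) / 3).
Proof.
move=> lt_eta4 lt_i9 lt_j9.
rewrite /Rfam_entry /PiF trace_proj_dual ?vnorm2_displace ?vnorm2_fiducial ?vnorm2_psi0 //.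
rewrite overlap_covariance fiducial_overlap ?perm_overlap_code //.
exact: label_diff_lt.
Qed.

Definition rot_value (t : R) (k : nat) : R :=
  match k with
  | 0%nat => aR t
  | 1%nat => aR (t - PI / 3)%R
  | 2%nat => aR (t + PI / 3)%R
  | _ => 0
  end.

(* Bridges between the field operations of the library on R and those of Stdlib. *)
Lemma ring_inv3 : ((3 : R)^-1)%R = / 3.
Proof.
rewrite /GRing.inv /= /Rinv' /Reqb; case: Req_EM_T => // eq30.
by change (3 = 0) in eq30; lra.
Qed.

Lemma aRE x : aR x = (1 + 2 * cos (2 * x)) / 3.
Proof. by rewrite /aR ring_inv3. Qed.

Lemma ring_sub_PI3 t : (t - PI / 3)%R = t - PI / 3.
Proof. by rewrite ring_inv3. Qed.

Lemma ring_add_PI3 t : (t + PI / 3)%R = t + PI / 3.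
Proof. by rewrite ring_inv3. Qed.

(* 4 cos^2 x - 1 = 1 + 2 cos 2x turns overlaps into entries of R(t). *)
Lemma rot_value_overlap t k : (k < 4)%coq_nat ->
  (4 * overlap_value t k - 1) / 3 = rot_value t k.
Proof.
case: k => [|[|[|[|?]]]] ?; try (exfalso; lia); rewrite /= ?ring_sub_PI3 ?ring_add_PI3;
  by rewrite ?aRE ?cos_2a_cos; field.
Qed.

Lemma cos_2PI3_shift x :
  cos (x - 2 * (PI / 3)) = - cos x / 2 + sqrt 3 / 2 * sin x /\
  cos (x + 2 * (PI / 3)) = - cos x / 2 - sqrt 3 / 2 * sin x.
Proof. by rewrite cos_minus cos_plus cos_2PI3 sin_2PI3; split; field. Qed.

Ltac expand_aR t :=
  rewrite !aRE (_ : 2 * (t - PI / 3) = 2 * t - 2 * (PI / 3)); last ring;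
  rewrite (_ : 2 * (t + PI / 3) = 2 * t + 2 * (PI / 3)); last ring;
  have [-> ->] := cos_2PI3_shift (2 * t).

(* The three quadratic trigonometric identities behind A(t)^T A(t) = 1 and det A(t) = 1. *)
Lemma aR_sum t : aR t + aR (t - PI / 3) + aR (t + PI / 3) = 1.
Proof. by expand_aR t; field. Qed.

Lemma aR_sq_sum t :
  aR t * aR t + aR (t - PI / 3) * aR (t - PI / 3) + aR (t + PI / 3) * aR (t + PI / 3) = 1.
Proof.
have pythagoras := sin_cos_sq (2 * t).
by expand_aR t; rewrite /Rdiv; ring_simplify; rewrite pow2_sqrt; lra.
Qed.

Lemma aR_cross_sum t :
  aR t * aR (t - PI / 3) + aR (t - PI / 3) * aR (t + PI / 3) + aR (t + PI / 3) * aR t = 0.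
Proof.
have pythagoras := sin_cos_sq (2 * t).
by expand_aR t; rewrite /Rdiv; ring_simplify; rewrite pow2_sqrt; lra.
Qed.

Local Close Scope R_scope.
Import GRing.Theory.
Local Open Scope ring_scope.

(** * Circulant 3 x 3 matrices *)

Section Circulant.
Import ring.
Variable K : comNzRingType.

(* circ(x, y, z): rows (x y z), (z x y), (y z x). *)
Definition circ3 (x y z : K) : 'M[K]_3 :=
  \matrix_(i < 3, j < 3) [:: x; y; z]`_((j + 3 - i) %% 3).

Lemma det_circ3 x y z :
  \det (circ3 x y z) = (x + y + z) * (x * x + y * y + z * z - (x * y + y * z + z * x)).
Proof.
rewrite (expand_det_row _ 0) !big_ord_recl big_ord0 /cofactor.
rewrite !(expand_det_row _ 0) !big_ord_recl !big_ord0 /cofactor !det_mx11 !mxE /=.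
by rewrite !expr0 !expr1 !expr2; ring.
Qed.

Lemma circ3_orthogonal x y z :
  x * x + y * y + z * z = 1 -> x * y + y * z + z * x = 0 ->
  (circ3 x y z)^T *m circ3 x y z = 1%:M.
Proof.
move=> sq_sum cross_sum; apply/matrixP => i j.
rewrite !mxE !big_ord_recl big_ord0 !mxE.
by case: i => [[|[|[|?]]] ?]; case: j => [[|[|[|?]]] ?] //=;
  rewrite addr0 ?mulr1n ?mulr0n; first [rewrite -sq_sum | rewrite -cross_sum]; ring.
Qed.
End Circulant.
Arguments circ3 {K} x y z.

Lemma block_diag_orthogonal (K : comNzRingType) m n (A : 'M[K]_m) (B : 'M[K]_n) :
  A^T *m A = 1%:M -> B^T *m B = 1%:M -> (block_mx A 0 0 B)^T *m block_mx A 0 0 B = 1%:M.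
Proof.
move=> orth_A orth_B.
by rewrite tr_block_mx !trmx0 mulmx_block !mul0mx !mulmx0 !addr0 !add0r orth_A orth_B
  -scalar_mx_block.
Qed.

Section PermConj.
Variables (K : comUnitRingType) (n : nat) (s : 'S_n.+1).

Lemma invmx_perm : invmx (perm_mx s) = perm_mx s^-1 :> 'M[K]_n.+1.
Proof. by rewrite perm_mxV. Qed.

Lemma perm_conj_entry (M : 'M[K]_n.+1) i j :
  (invmx (perm_mx s) *m M *m perm_mx s) i j = M (s^-1 i)%g (s^-1 j)%g.
Proof. by rewrite invmx_perm -row_permE -[s in perm_mx s]invgK -col_permE !mxE. Qed.

Lemma perm_conj_rotation (M : 'M[K]_n.+1) :
  M^T *m M = 1%:M -> \det M = 1 ->
  let N := invmx (perm_mx s) *m M *m perm_mx s in N^T *m N = 1%:M /\ \det N = 1.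
Proof.
move=> orth_M det_M N; rewrite /N invmx_perm.
have inv_s : perm_mx s *m perm_mx s^-1 = 1%:M :> 'M[K]_n.+1.
  by rewrite -perm_mxM mulgV perm_mx1.
split.
  rewrite !trmx_mul !tr_perm_mx invgK -!mulmxA (mulmxA (perm_mx s)) inv_s mul1mx.
  by rewrite (mulmxA M^T) orth_M mul1mx -perm_mxM mulVg perm_mx1.
by rewrite !det_mulmx det_M mulr1 -det_mulmx -perm_mxM mulVg perm_mx1 det1.
Qed.
End PermConj.

Lemma Amat_circ t : Amat t = circ3 (aR t) (aR (t - PI / 3)%R) (aR (t + PI / 3)%R).
Proof.
by apply/matrixP => i j; rewrite !mxE;
  case: i => [[|[|[|?]]] ?]; case: j => [[|[|[|?]]] ?] //=.
Qed.

Lemma Amat_rotation t : (Amat t)^T *m Amat t = 1%:M /\ \det (Amat t) = 1.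
Proof.
rewrite Amat_circ ring_sub_PI3 ring_add_PI3.
move: (aR_sum t) (aR_sq_sum t) (aR_cross_sum t).
move: (aR t) (aR (Rminus t (Rdiv PI 3))) (aR (Rplus t (Rdiv PI 3))) => x y z sum sq cross.
split; first exact: circ3_orthogonal.
rewrite det_circ3.
have -> : x + y + z = 1 := sum.
have -> : x * x + y * y + z * z = 1 := sq.
have -> : x * y + y * z + z * x = 0 := cross.
by rewrite subr0 mulr1.
Qed.

Ltac case_I3 := repeat match goal with [ x : 'I_3 |- _ ] => case: x => [[|[|[|?]]] ?] // end.
Ltac case_I6 :=
  repeat match goal with [ x : 'I_(3 + 3) |- _ ] => case: x => [[|[|[|[|[|[|?]]]]]] ?] // end.

Lemma Rbig_block t :
  Rbig t = block_mx (Amat t) 0 0 (block_mx (Amat t) 0 0 (Amat t)) :> 'M_(3 + (3 + 3)).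
Proof.
apply/matrixP => i j; rewrite -[i](@splitK 3 (3 + 3)) -[j](@splitK 3 (3 + 3)).
case: (split i) => [a|i']; case: (split j) => [b|j'].
- rewrite /= block_mxEul !mxE /=. case_I3.
- rewrite /= block_mxEur !mxE /=. case_I3; case_I6.
- rewrite /= block_mxEdl !mxE /=. case_I3; case_I6.
- rewrite /= block_mxEdr.
  rewrite -[i'](@splitK 3 3) -[j'](@splitK 3 3).
  case: (split i') => [a|a]; case: (split j') => [b|b].
  + rewrite /= block_mxEul !mxE /=. case_I3.
  + rewrite /= block_mxEur !mxE /=. case_I3.
  + rewrite /= block_mxEdl !mxE /=. case_I3.
  + rewrite /= block_mxEdr !mxE /=. case_I3.
Qed.

Lemma Rbig_rotation t : (Rbig t)^T *m Rbig t = 1%:M /\ \det (Rbig t) = 1.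
Proof.
have [orth_A det_A] := Amat_rotation t.
have orth_R : (Rbig t)^T *m Rbig t = 1%:M :> 'M_(3 + (3 + 3)).
  by rewrite Rbig_block; apply: (@block_diag_orthogonal _ 3 (3 + 3)) => //;
    apply: (@block_diag_orthogonal _ 3 3).
have det_R : \det (Rbig t : 'M_(3 + (3 + 3))) = 1.
  by rewrite Rbig_block !det_ublock det_A !mulr1.
by split; [exact: orth_R | exact: det_R].
Qed.

Lemma Rbig_pattern t (i j : 'I_9) : Rbig t i j = rot_value t (rot_pattern i j).
Proof.
rewrite mxE.
by case: i => [[|[|[|[|[|[|[|[|[|?]]]]]]]]] ?] //; case: j => [[|[|[|[|[|[|[|[|[|?]]]]]]]]] ?] //;
  rewrite /= ?mxE.
Qed.

Lemma rot_pattern_lt i j : (rot_pattern i j < 4)%coq_nat.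
Proof. by apply/ltP; rewrite /rot_pattern; do ! case: eqP. Qed.

Definition perm_ord (eta : nat) (s : bool) (i : 'I_9) : 'I_9 := inord (perm_index eta s i).

Lemma perm_index_lt eta s (i : 'I_9) : (eta < 4)%N -> (perm_index eta s i < 9)%N.
Proof.
case: eta => [|[|[|[|?]]]] // _; case: s;
  by case: i => [[|[|[|[|[|[|[|[|[|?]]]]]]]]] ?].
Qed.

Lemma perm_ord_inj eta s : (eta < 4)%N -> injective (perm_ord eta s).
Proof.
move=> lt_eta4 i j /(congr1 val); rewrite /perm_ord /= !inordK ?perm_index_lt // => eq_ij.
apply: val_inj; move: eq_ij.
case: eta lt_eta4 => [|[|[|[|?]]]] // _; case: s;
  case: i => [[|[|[|[|[|[|[|[|[|?]]]]]]]]] ?] //; case: j => [[|[|[|[|[|[|[|[|[|?]]]]]]]]] ?] //.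
Qed.

Lemma Pmat_perm eta s (lt_eta4 : (eta < 4)%N) :
  Pmat eta s = perm_mx (perm (perm_ord_inj eta s lt_eta4)).
Proof.
apply/matrixP => i j; rewrite perm_mxEsub !mxE permE /perm_ord.
case: eta lt_eta4 => [|[|[|[|?]]]] // lt_eta4; case: s;
  case: i => [[|[|[|[|[|[|[|[|[|?]]]]]]]]] ?] //; rewrite /perm_index /=;
  by rewrite -val_eqE /= inordK // eqSS eq_sym; case: (_ == _).
Qed.

Theorem mainTheorem5 (eta : 'I_4) (s : bool) (t : R)
  (ht : Rle 0 t /\ Rle t (Rdiv PI 6)) :
  let M : 'M[R]_9 :=
    (invmx (Pmat eta s) *m Rbig t *m Pmat eta s)%R in
  (forall i j : 'I_9, Rfam_entry eta s t i j = Cofr (M i j)) /\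
  ((M^T *m M)%R = 1%:M%R /\ \det M = 1%R).
Proof.
move=> M; have lt_eta4 := ltn_ord eta.
set p := perm (perm_ord_inj eta s lt_eta4).
have defM : M = invmx (perm_mx p) *m Rbig t *m perm_mx p by rewrite /M Pmat_perm.
split; last by rewrite defM; have [] := Rbig_rotation t; exact: perm_conj_rotation.
move=> i j; rewrite defM perm_conj_entry.
have label_p k : nat_of_ord k = perm_index eta s (p^-1 k)%g.
  by rewrite -{1}(permKV p k) permE /perm_ord inordK // perm_index_lt.
have lt9 (k : 'I_9) : (k < 9)%coq_nat by apply/ltP.
rewrite (label_p i) (label_p j) (Rfam_entry_perm _ _ _ _ _ (elimT ltP lt_eta4) (lt9 _) (lt9 _)).
by rewrite (rot_value_overlap _ _ (rot_pattern_lt _ _)) Rbig_pattern.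
Qed.
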